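(* Let $G$ be a finite graph with minimum degree at least $3$, let $x_0$ be a vertex of $G$, let $P$ be a longest path in $G$ starting at $x_0$, and let $(S,T)$ be the Pósa pair of $P$ (defined in the context). Then $$e(S\cup T)>|S\cup T|,$$ where $e(A)$ denotes the number of edges of the subgraph of $G$ induced by $A$; i.e. the induced subgraph $G(S\cup T)$ has edge density strictly greater than $1$.
   Context: Rotations and Pósa sets: If $Q=x_0x_1\dots x_h$ is a path from $x_0$ and $\{x_h,x_i\}$ is an edge of $G$ for some $i<h-1$, then $Q'=x_0\dots x_i x_h x_{h-1}\dots x_{i+1}$ is again a path from $x_0$ of the same length, said to be obtained from $Q$ by a rotation. For a longest path $P=x_0\dots x_h$ from $x_0$, $S$ is the set consisting of $x_h$ and the endpoints (other than $x_0$) of all paths obtainable from $P$ by any finite sequence of rotations, and $T=N(S)$ is the set of vertices not in $S$ having a neighbor in $S$. *)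

(* A finite simple graph is a symmetric irreflexive relation
   e on a finType V. A path from x0 is represented by its full vertex
   sequence q = [:: x0; x1; ...; xh]. *)
From Stdlib Require Import Relation_Definitions Relation_Operators.
From mathcomp Require Import all_boot.
Set Implicit Arguments.
Unset Strict Implicit.
Unset Printing Implicit Defensive.

Section Graph.
Variables (V : finType) (e : rel V).

Definition is_path_from (x0 : V) (q : seq V) : bool :=
  [&& head x0 q == x0, q != [::], path e x0 (behead q) & uniq q].

Definition gdeg (v : V) : nat := #|[set w | e v w]|.

(* q' is obtained from q by one rotation: for q = x0 ... xh, an edge {xh, xi}
   with i < h-1 gives q' = x0 ... xi xh x_{h-1} ... x_{i+1}. *)
Definition rotation_step (x0 : V) (q q' : seq V) : Prop :=
  exists i : nat, [/\ i.+2 < size q,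
                      e (last x0 q) (nth x0 q i) &
                      q' = take i.+1 q ++ rev (drop i.+1 q)].

Definition rotations (x0 : V) : relation (seq V) :=
  clos_refl_trans (seq V) (rotation_step x0).

Definition edges_in (A : {set V}) : nat :=
  #|[set E : {set V} | (E \subset A) &&
        [exists x, exists y, e x y && (E == [set x; y])]]|.

Definition nbhd_out (S : {set V}) : {set V} :=
  [set v | (v \notin S) && [exists u in S, e u v]].

End Graph.

From Stdlib Require Import Relation_Operators Operators_Properties.
From mathcomp Require Import all_boot zify.
Set Implicit Arguments.
Unset Strict Implicit.
Unset Printing Implicit Defensive.

(* Write U = S ∪ T and suppose that G[U] has at most |U| edges.  Pósa's
   rotation argument shows that every t ∈ T is a neighbour on P of some s ∈ S,
   whence |T| < 2|S| (the endpoint of P has no successor).  Call t ∈ T pendant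
   if it has at most one neighbour in U.  A pendant neighbour of the endpoint of
   a rotated path must sit just before that endpoint, so each s ∈ S has at most
   one pendant neighbour.  Comparing degree sums in G[U] (at least 3 on S, at
   least 2 on the non-pendant part of T) with 2 e(U) ≤ 2|U| forces equality
   everywhere: every s ∈ S has degree 3 and exactly one pendant neighbour, and
   every non-pendant t ∈ T has exactly two neighbours in U.  Then "the endpoint
   has a neighbour in S" is invariant under rotations and fails for the first
   vertex of P lying in S, so S is independent.  Each s ∈ S therefore has two
   non-pendant neighbours in T, each of which has at most two neighbours in S,
   so T has at least |S| non-pendant and at least |S| pendant vertices,
   contradicting |T| < 2|S|. *)

Lemma exchange_sum_card (I J : finType) (A : {set I}) (B : {set J})
    (r : I -> J -> bool) :
  \sum_(a in A) #|[set b in B | r a b]| = \sum_(b in B) #|[set a in A | r a b]|.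
Proof.
have card_sum (K L : finType) (C : {set L}) (q : K -> L -> bool) a :
    #|[set b in C | q a b]| = \sum_(b in C) (q a b : nat).
  rewrite -sum1_card (eq_bigl (fun b => (b \in C) && q a b)) => [|b].
    by rewrite big_mkcondr; apply: eq_bigr => b _; case: (q a b).
  by rewrite inE.
under eq_bigr => a _ do rewrite card_sum.
under [RHS]eq_bigr => b _ do rewrite (card_sum _ _ A (fun b a => r a b)).
exact: exchange_big.
Qed.

Lemma sum_lbound_eq (I : finType) (A : {set I}) (f : I -> nat) b :
  (forall i, i \in A -> b <= f i) -> \sum_(i in A) f i <= #|A| * b ->
  forall i, i \in A -> f i = b.
Proof.
move=> f_ge sum_le.
have /eqP : \sum_(i in A) (f i - b) = 0.
  by rewrite (sumnB _ (E1 := fun _ => b)) // sum_nat_const; lia.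
rewrite sum_nat_eq0 => /forall_inP f_le i iA.
by have := f_ge i iA; have := f_le i iA; lia.
Qed.

Lemma sum_ubound_eq (I : finType) (A : {set I}) (f : I -> nat) b :
  (forall i, i \in A -> f i <= b) -> #|A| * b <= \sum_(i in A) f i ->
  forall i, i \in A -> f i = b.
Proof.
move=> f_le sum_ge.
have /eqP : \sum_(i in A) (b - f i) = 0.
  by rewrite (sumnB _ (E2 := fun _ => b)) // sum_nat_const; lia.
rewrite sum_nat_eq0 => /forall_inP f_ge i iA.
by have := f_ge i iA; have := f_le i iA; lia.
Qed.

Section InducedDegree.
Variables (V : finType) (e : rel V).
Hypothesis e_irr : irreflexive e.

Definition deg_in (A : {set V}) (v : V) : nat := #|[set u in A | e v u]|.

Lemma sum_deg_in_le_edges (A : {set V}) :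
  \sum_(v in A) deg_in A v <= 2 * edges_in e A.
Proof.
rewrite /edges_in; set E := [set X : {set V} | _].
have deg_le v : v \in A -> deg_in A v <= #|[set X in E | v \in X]|.
  move=> vA; rewrite /deg_in -(@card_in_imset _ _ (fun u => [set v; u])); last first.
    move=> u1 u2; rewrite !inE => /andP [_ e1] /andP [_ e2] eq12.
    have : u1 \in [set v; u2] by rewrite -eq12 !inE eqxx orbT.
    by rewrite !inE => /orP [/eqP u1v | /eqP //]; move: e1; rewrite u1v e_irr.
  apply: subset_leq_card; apply/subsetP => X /imsetP [u]; rewrite inE.
  move=> /andP [uA evu] ->; rewrite !inE eqxx andbT; apply/andP; split.
    by apply/subsetP => z; rewrite !inE => /orP [] /eqP ->.
  by apply/existsP; exists v; apply/existsP; exists u; rewrite evu eqxx.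
apply: (@leq_trans (\sum_(v in A) #|[set X in E | v \in X]|)).
  exact: leq_sum.
rewrite (exchange_sum_card A E (fun v X => v \in X)) mulnC -sum_nat_const.
apply: leq_sum => X; rewrite inE => /andP [_].
move=> /existsP [x /existsP [y /andP [_ /eqP ->]]].
apply: leq_trans (_ : #|[set x; y]| <= 2); last by rewrite cards2; case: (x != y).
by apply: subset_leq_card; apply/subsetP => z; rewrite inE => /andP [].
Qed.

End InducedDegree.

Section Rotations.
Variables (V : finType) (e : rel V) (x0 : V).
Hypothesis e_sym : symmetric e.

Definition rotate_after (i : nat) (q : seq V) : seq V :=
  take i.+1 q ++ rev (drop i.+1 q).

Lemma size_rotate_after i q : i < size q -> size (rotate_after i q) = size q.
Proof.
by move=> ilt; rewrite size_cat size_rev size_takel // size_drop subnKC.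
Qed.

Lemma nth_rotate_after q i j : i < size q -> j < size q ->
  nth x0 (rotate_after i q) j =
    if j <= i then nth x0 q j else nth x0 q (size q + i - j).
Proof.
move=> ilt jlt; rewrite nth_cat size_takel //.
case: ifP => ji; first by rewrite nth_take // ifT.
rewrite ifF; last by lia.
by rewrite nth_rev size_drop ?nth_drop; [congr nth; lia | lia].
Qed.

Lemma last_rotate_after q i : i.+2 < size q ->
  last x0 (rotate_after i q) = nth x0 q i.+1.
Proof.
move=> ilt; rewrite -nth_last size_rotate_after; last lia.
by rewrite nth_rotate_after ?ifF; [congr nth | lia ..]; lia.
Qed.

Definition adjacent_at (q : seq V) (a b : V) : Prop :=
  exists k, [/\ k.+1 < size q, nth x0 q k = a & nth x0 q k.+1 = b].

Definition adjacent_on (q : seq V) (a b : V) : Prop :=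
  adjacent_at q a b \/ adjacent_at q b a.

Lemma adjacent_at_rotate_after q i a b : i.+2 < size q ->
  b != nth x0 q i.+1 -> adjacent_at q a b -> adjacent_on (rotate_after i q) a b.
Proof.
move=> ilt bnew [k [klt qka qkb]]; have ilt' : i < size q by lia.
case: (ltngtP k i) => [ki | ik | ki]; last by move: bnew; rewrite -qkb ki eqxx.
  left; exists k; rewrite size_rotate_after // !nth_rotate_after //; try lia.
  by rewrite ifT ?ifT; try lia.
right; exists (size q + i - k.+1); rewrite size_rotate_after //.
rewrite !nth_rotate_after; try lia.
rewrite !ifF; try lia.
by split; [lia | rewrite -qkb | rewrite -qka]; congr nth; lia.
Qed.

Lemma adjacent_on_rotate_after q i a b : i.+2 < size q ->
  a != nth x0 q i.+1 -> b != nth x0 q i.+1 ->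
  adjacent_on q a b -> adjacent_on (rotate_after i q) a b.
Proof.
move=> ilt anew bnew [qab | qba]; first exact: adjacent_at_rotate_after.
by case: (adjacent_at_rotate_after ilt anew qba); [right | left].
Qed.

Lemma adjacent_on_nth (q : seq V) p z : uniq q -> p < size q ->
  adjacent_on q (nth x0 q p) z -> z = nth x0 q p.+1 \/ 0 < p /\ z = nth x0 q p.-1.
Proof.
move=> qU plt [] [k [klt qk qk1]].
- have klt' : k < size q by lia.
  have kp : k = p by apply/eqP; rewrite -(nth_uniq x0 klt' plt qU) qk.
  by left; rewrite -qk1 kp.
- have kp : k.+1 = p by apply/eqP; rewrite -(nth_uniq x0 klt plt qU) qk1.
  by right; rewrite -qk -kp.
Qed.

Lemma is_path_from_rcons q y : is_path_from e x0 q -> y \notin q ->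
  e (last x0 q) y -> is_path_from e x0 (rcons q y).
Proof.
case: q => [|a q] /and4P [/= /eqP a0 _ qpath qU] // yq ey.
case/andP: qU => aq qU; move: yq; rewrite inE negb_or => /andP [ya yq].
rewrite /is_path_from /= a0 eqxx rcons_path qpath -a0 ey mem_rcons inE.
by rewrite negb_or rcons_uniq eq_sym ya aq yq qU.
Qed.

Definition path_on (P q : seq V) : Prop :=
  [/\ perm_eq q P, nth x0 q 0 = x0 &
      forall k, k.+1 < size q -> e (nth x0 q k) (nth x0 q k.+1)].

Lemma path_on_rotation_step P q q' :
  path_on P q -> rotation_step e x0 q q' -> path_on P q'.
Proof.
case=> qP q0 qe [i [ilt elast ->]]; rewrite -/(rotate_after i q).
have ilt' : i < size q by lia.
split.
- apply: perm_trans qP.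
  rewrite /rotate_after -[X in perm_eq _ X](cat_take_drop i.+1 q).
  by apply: perm_cat; rewrite ?perm_rev.
- by rewrite nth_rotate_after //; lia.
move=> k; rewrite size_rotate_after // => klt.
rewrite !nth_rotate_after //; try lia.
case: (ltngtP k i) => ki.
- by apply: qe; lia.
- by rewrite e_sym (_ : size q + i - k = (size q + i - k.+1).+1) ?qe; lia.
- by rewrite ki (_ : size q + i - i.+1 = (size q).-1) ?nth_last 1?e_sym; lia.
Qed.

Lemma path_on_rotations P q : path_on P P -> rotations e x0 P q -> path_on P q.
Proof.
move=> PP; apply: clos_refl_trans_ind_left => // A B _ AP.
exact: path_on_rotation_step.
Qed.

End Rotations.

Section Posa.
Variables (V : finType) (e : rel V).
Hypotheses (e_sym : symmetric e) (e_irr : irreflexive e).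
Hypothesis mindeg : forall v : V, 3 <= gdeg e v.
Variables (x0 : V) (P : seq V).
Hypothesis P_path : is_path_from e x0 P.
Hypothesis P_longest : forall q : seq V, is_path_from e x0 q -> size q <= size P.
Variable S : {set V}.
Hypothesis S_def : forall v : V, v \in S <->
  (v = last x0 P \/ exists q : seq V, rotations e x0 P q /\ last x0 q = v /\ v <> x0).

Local Notation path_on := (path_on e x0 P).
Local Notation rotation := (rotations e x0 P).

Lemma path_on_P : path_on P.
Proof.
case/and4P: P_path; case: P => [|a q] //= /eqP -> _ /(pathP x0) qe _.
by split=> // k /qe.
Qed.

Lemma uniq_P : uniq P.
Proof. by case/and4P: P_path. Qed.

Lemma size_P_gt1 : 1 < size P.
Proof.
have : 0 < gdeg e x0 by apply: leq_trans (mindeg x0).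
rewrite card_gt0 => /set0Pn [y]; rewrite inE => x0y.
have x0_neq_y : x0 != y by apply: contraTneq x0y => <-; rewrite e_irr.
apply: (P_longest (q := [:: x0; y])).
by rewrite /is_path_from /= x0y inE x0_neq_y eqxx.
Qed.

Section PathOnP.
Variable Q : seq V.
Hypothesis QP : path_on Q.

Lemma size_path_on : size Q = size P.
Proof. by case: QP => /perm_size. Qed.

Lemma uniq_path_on : uniq Q.
Proof. by case: QP => /perm_uniq ->; case/and4P: P_path. Qed.

Lemma mem_path_on : Q =i P.
Proof. by case: QP => /perm_mem. Qed.

Lemma path_on_cons : Q = x0 :: behead Q.
Proof.
have := size_P_gt1; rewrite -size_path_on; case: QP => _.
by case: Q => [|a q] //= ->.
Qed.

Lemma nth_last_path_on : nth x0 Q (size P).-1 = last x0 Q.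
Proof. by rewrite -size_path_on nth_last. Qed.

Lemma edge_path_on k : k.+1 < size P -> e (nth x0 Q k) (nth x0 Q k.+1).
Proof. by case: QP => _ _ qe; rewrite -size_path_on; apply: qe. Qed.

Lemma nth_path_on_inj i j : nth x0 Q i = nth x0 Q j ->
  i < size P -> j < size P -> i = j.
Proof.
move=> /eqP; rewrite -size_path_on => + ilt jlt.
by rewrite nth_uniq ?uniq_path_on // => /eqP.
Qed.

Lemma index_path_on_lt y : y \in Q -> index y Q < size P.
Proof. by rewrite -size_path_on index_mem. Qed.

Lemma index_path_on_lt_last y : y \in Q -> y != last x0 Q ->
  (index y Q).+1 < size P.
Proof.
move=> yQ y_last; have := index_path_on_lt yQ.
have : index y Q != (size P).-1.
  by apply: contra_neq y_last => yi; rewrite -nth_last_path_on -yi nth_index.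
lia.
Qed.

Lemma is_path_path_on : is_path_from e x0 Q.
Proof.
have [_ _ Qe] := QP; move: Qe uniq_path_on.
rewrite /is_path_from path_on_cons /= eqxx => Qe ->; rewrite andbT.
by apply/(pathP x0) => k /Qe.
Qed.

Lemma last_path_on_neq_x0 : last x0 Q != x0.
Proof.
have [_ Q0 _] := QP; have P2 := size_P_gt1.
by rewrite -nth_last_path_on -{2}Q0; apply/eqP => /nth_path_on_inj; lia.
Qed.

End PathOnP.

Lemma rotation_path_on Q : rotation Q -> path_on Q.
Proof. exact/path_on_rotations/path_on_P. Qed.

Lemma rotation_rotate_after Q i : rotation Q -> i.+2 < size Q ->
  e (last x0 Q) (nth x0 Q i) -> rotation (rotate_after i Q).
Proof. by move=> QR ilt elast; apply: rt_trans QR (rt_step _ _ _ _ _); exists i. Qed.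

Lemma last_rotation_in_S Q : rotation Q -> last x0 Q \in S.
Proof.
move=> QR; apply/S_def; right; exists Q; do 2!split=> //.
exact/eqP/last_path_on_neq_x0/rotation_path_on.
Qed.

Lemma S_rotation s : s \in S -> exists2 Q, rotation Q & last x0 Q = s.
Proof.
case/S_def => [-> | [Q [QR [<- _]]]]; last by exists Q.
by exists P => //; apply: rt_refl.
Qed.

Lemma last_P_in_S : last x0 P \in S.
Proof. exact/last_rotation_in_S/rt_refl. Qed.

Lemma x0_notin_S : x0 \notin S.
Proof.
apply/negP => /S_rotation [Q /rotation_path_on QP lastQ].
by move: (last_path_on_neq_x0 QP); rewrite lastQ eqxx.
Qed.

Lemma nbr_last_rotation_mem Q y : rotation Q -> e (last x0 Q) y -> y \in Q.
Proof.
move=> QR elast; have QP := rotation_path_on QR; apply: contraT => yQ.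
suff : size (rcons Q y) <= size P by rewrite size_rcons (size_path_on QP); lia.
exact/P_longest/is_path_from_rcons/elast/yQ/is_path_path_on.
Qed.

Lemma succ_nbr_last_rotation Q y : rotation Q -> e (last x0 Q) y ->
  (index y Q).+1 < size P /\ nth x0 Q (index y Q).+1 \in S.
Proof.
move=> QR elast; have QP := rotation_path_on QR.
have yQ := nbr_last_rotation_mem QR elast.
have Qy : nth x0 Q (index y Q) = y := nth_index x0 yQ.
have ylt : (index y Q).+1 < size P.
  apply: (index_path_on_lt_last QP yQ).
  by apply: contraTneq elast => <-; rewrite e_irr.
split=> //.
have [lt2 | eq2] : (index y Q).+2 < size P \/ (index y Q).+2 = size P by lia.
- rewrite -last_rotate_after ?(size_path_on QP) //.
  by apply/last_rotation_in_S/rotation_rotate_after; rewrite ?(size_path_on QP) ?Qy.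
- rewrite (_ : (index y Q).+1 = (size P).-1); last lia.
  by rewrite (nth_last_path_on QP) last_rotation_in_S.
Qed.

Local Notation T := (nbhd_out e S).
Local Notation U := (S :|: nbhd_out e S).

Definition pendant : {set V} := [set t in T | deg_in e U t <= 1].

Lemma mem_T t : (t \in T) = (t \notin S) && [exists u in S, e u t].
Proof. by rewrite inE. Qed.

Lemma T_notin_S t : t \in T -> t \notin S.
Proof. by rewrite mem_T => /andP []. Qed.

Lemma T_nbr t : t \in T -> exists2 s, s \in S & e s t.
Proof. by rewrite mem_T => /andP [_ /exists_inP]. Qed.

Lemma nbr_S_in_U s u : s \in S -> e s u -> u \in U.
Proof.
move=> sS esu; rewrite inE mem_T; have [uS | uS] := boolP (u \in S) => //.
by rewrite orFb andTb; apply/exists_inP; exists s.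
Qed.

Lemma deg_in_U_S s : s \in S -> deg_in e U s = gdeg e s.
Proof.
move=> sS; apply: eq_card => u; rewrite !inE.
by apply/andb_idl => /(nbr_S_in_U sS); rewrite !inE.
Qed.

Lemma pendant_T t : t \in pendant -> t \in T.
Proof. by rewrite inE => /andP []. Qed.

Lemma pendant_index Q s t : rotation Q -> last x0 Q = s -> e s t ->
  t \in pendant -> index t Q = (size P).-2.
Proof.
move=> QR lastQ est; rewrite inE => /andP [tT tdeg].
have QP := rotation_path_on QR; have elast : e (last x0 Q) t by rewrite lastQ.
have sS : s \in S by rewrite -lastQ last_rotation_in_S.
have [tlt gS] := succ_nbr_last_rotation QR elast.
set g := nth x0 Q (index t Q).+1 in gS.
suff : ~~ ((index t Q).+2 < size P) by lia.
apply: contraTN tdeg => tlt2; rewrite -ltnNge.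
have sg : s != g.
  rewrite -lastQ -(nth_last_path_on QP); apply/eqP => /(nth_path_on_inj QP); lia.
have etg : e t g.
  by rewrite -{1}(nth_index x0 (nbr_last_rotation_mem QR elast)) edge_path_on.
have -> : 2 = #|[set s; g]| by rewrite cards2 sg.
apply/subset_leq_card/subsetP => u; rewrite !inE => /orP [] /eqP ->.
  by rewrite sS e_sym est.
by rewrite gS etg.
Qed.

Lemma pendant_nbr_le1 s : s \in S -> #|[set t in pendant | e s t]| <= 1.
Proof.
move=> /S_rotation [Q QR lastQ]; apply/card_le1_eqP => t1 t2.
move=> /setIdP [p1 e1] /setIdP [p2 e2].
have tQ t : e s t -> nth x0 Q (index t Q) = t.
  by move=> est; apply/nth_index/(nbr_last_rotation_mem QR); rewrite lastQ.
by rewrite -(tQ _ e1) -(tQ _ e2) !(pendant_index QR lastQ).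
Qed.

Lemma card_pendant_le : #|pendant| <= #|S|.
Proof.
have := exchange_sum_card S pendant e.
have nbr_le : \sum_(s in S) #|[set t in pendant | e s t]| <= #|S|.
  by rewrite -sum1_card; apply: leq_sum => s /pendant_nbr_le1.
have nbr_ge : #|pendant| <= \sum_(t in pendant) #|[set s in S | e s t]|.
  rewrite -sum1_card; apply: leq_sum => t /pendant_T /T_nbr [s sS est].
  by rewrite card_gt0; apply/set0Pn; exists s; rewrite inE sS.
lia.
Qed.

Lemma adjacent_on_rotation Q a b : rotation Q -> adjacent_on x0 P a b ->
  a \notin S -> b \notin S -> adjacent_on x0 Q a b.
Proof.
move=> QR Pab aS bS; elim/clos_refl_trans_ind_left: QR => // A B AR Aab.
move=> [i [ilt elast ->]]; rewrite -/(rotate_after i A).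
have AS : nth x0 A i.+1 \in S.
  by rewrite -last_rotate_after //; apply/last_rotation_in_S/rotation_rotate_after.
by apply: adjacent_on_rotate_after => //; [move: aS | move: bS];
  apply: contraNneq => ->.
Qed.

Lemma T_adjacent_S t : t \in T -> exists2 s, s \in S & adjacent_on x0 P t s.
Proof.
move=> tT; have tS := T_notin_S tT; have P2 := size_P_gt1.
have [s sS est] := T_nbr tT; have [Q QR lastQ] := S_rotation sS.
have QP := rotation_path_on QR; have elast : e (last x0 Q) t by rewrite lastQ.
have [plt QsuccS] := succ_nbr_last_rotation QR elast.
have tQ := nbr_last_rotation_mem QR elast.
have tP : t \in P by rewrite -(mem_path_on QP).
set p := index t Q in plt QsuccS; have Qp : nth x0 Q p = t := nth_index x0 tQ.
set k := index t P; have Pk : nth x0 P k = t := nth_index x0 tP.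
have klt : k.+1 < size P.
  apply: (index_path_on_lt_last path_on_P tP).
  by apply: contraNneq tS => ->; apply: last_P_in_S.
have Q_pred z : adjacent_on x0 P t z -> z \notin S -> 0 < p /\ z = nth x0 Q p.-1.
  move=> Ptz zS; have := adjacent_on_rotation QR Ptz tS zS; rewrite -Qp.
  have plt' : p < size Q by rewrite (size_path_on QP) ltnW.
  case/(adjacent_on_nth (uniq_path_on QP) plt') => // zsucc.
  by move: zS; rewrite zsucc QsuccS.
have [succS | succNS] := boolP (nth x0 P k.+1 \in S).
  by exists (nth x0 P k.+1) => //; left; exists k.
have [p_pos succQ] : 0 < p /\ nth x0 P k.+1 = nth x0 Q p.-1.
  by apply: Q_pred => //; left; exists k.
have k_pos : 0 < k.
  rewrite lt0n; apply: contraTneq p_pos => k0; rewrite -leqNgt leqn0; apply/eqP.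
  have [_ Q0 _] := QP; have [_ P0 _] := path_on_P.
  apply: (nth_path_on_inj QP _ (ltnW plt) (ltnW P2)).
  by rewrite Qp Q0 -P0 -k0 Pk.
have [predS | predNS] := boolP (nth x0 P k.-1 \in S).
  by exists (nth x0 P k.-1) => //; right; exists k.-1; rewrite prednK // ltnW.
have [_ predQ] : 0 < p /\ nth x0 P k.-1 = nth x0 Q p.-1.
  by apply: Q_pred => //; right; exists k.-1; rewrite prednK // ltnW.
move: predQ; rewrite -succQ => /(nth_path_on_inj path_on_P).
move=> /(_ (leq_ltn_trans (leq_pred k) (ltnW klt)) klt) /eqP.
by rewrite ltn_eqF // ltnS leq_pred.
Qed.

Lemma card_T_lt : #|T| < (#|S|).*2.
Proof.
have P2 := size_P_gt1.
pose pred v := nth x0 P (index v P).-1; pose succ v := nth x0 P (index v P).+1.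
have T_sub : T \subset pred @: S :|: succ @: (S :\ last x0 P).
  apply/subsetP => t /T_adjacent_S [s sS [] [k [klt Pk Pk1]]]; rewrite inE.
  - apply/orP; left; apply/imsetP; exists s => //.
    by rewrite /pred -Pk1 index_uniq ?uniq_P.
  - apply/orP; right; apply/imsetP; exists s.
      rewrite !inE sS andbT -Pk -(nth_last_path_on path_on_P).
      by apply/eqP => /(nth_path_on_inj path_on_P); lia.
    by rewrite /succ -Pk index_uniq ?uniq_P //; exact: ltnW.
have := subset_leq_card T_sub.
have := (leq_card_setU (pred @: S) (succ @: (S :\ last x0 P))).1.
have := leq_imset_card pred S; have := leq_imset_card succ (S :\ last x0 P).
have := cardsD1 (last x0 P) S; rewrite last_P_in_S.
lia.
Qed.

Lemma S_notin_pendant s : s \in S -> s \notin pendant.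
Proof. by apply: contraTN => /pendant_T /T_notin_S. Qed.

Lemma disjoint_S_T : [disjoint S & T].
Proof. by rewrite disjoint_sym disjoint_subset; apply/subsetP => v /T_notin_S. Qed.

Lemma card_U : #|U| = #|S| + #|T|.
Proof. by apply/eqP; rewrite (leq_card_setU S T).2 disjoint_S_T. Qed.

Lemma sum_U (f : V -> nat) :
  \sum_(v in U) f v = \sum_(v in S) f v + \sum_(v in T) f v.
Proof.
by rewrite -bigU ?disjoint_S_T //; apply: eq_bigl => v; rewrite in_setU.
Qed.

Definition first_S : nat := find [in S] P.

Lemma first_S_lt : first_S < size P.
Proof.
rewrite -has_find; apply/hasP; exists (last x0 P); last exact: last_P_in_S.
by rewrite -(nth_last_path_on path_on_P) mem_nth // ltn_predL ltnW ?size_P_gt1.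
Qed.

Lemma nth_first_S : nth x0 P first_S \in S.
Proof. by apply: (nth_find x0); rewrite has_find first_S_lt. Qed.

Lemma before_first_S k : k < first_S -> nth x0 P k \notin S.
Proof. by move=> k_lt; rewrite (before_find x0 k_lt). Qed.

Lemma first_S_pos : 0 < first_S.
Proof.
rewrite lt0n; apply: contraTneq nth_first_S => ->.
by have [_ -> _] := path_on_P; exact: x0_notin_S.
Qed.

Lemma first_S_lt_pred : first_S < (size P).-1.
Proof.
have P2 := size_P_gt1.
have : ~~ ([set u | e (last x0 P) u] \subset [set nth x0 P (size P).-2]).
  apply/negP => /subset_leq_card; rewrite cards1.
  by have := mindeg (last x0 P); rewrite /gdeg; lia.
case/subsetPn => y; rewrite !inE => ey y_pred.
have [ylt yS] := succ_nbr_last_rotation (rt_refl _ _ _) ey.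
have : index y P != (size P).-2.
  apply: contraNneq y_pred => <-.
  by rewrite nth_index // (nbr_last_rotation_mem (rt_refl _ _ _) ey).
suff : first_S <= (index y P).+1 by lia.
by rewrite leqNgt; apply: contraTN yS => /before_first_S.
Qed.

Lemma take_first_S_rotation Q : rotation Q -> take first_S Q = take first_S P.
Proof.
elim/clos_refl_trans_ind_left => // A B AR prefix [i [ilt elast ->]].
rewrite -/(rotate_after i A).
have [first_le | first_gt] := leqP first_S i.+1.
  by rewrite /rotate_after takel_cat ?take_takel // size_takel // ltnW // ltnW.
have := last_rotation_in_S (rotation_rotate_after AR ilt elast).
rewrite last_rotate_after // -(nth_take x0 first_gt) prefix nth_take //.
by rewrite (negbTE (before_first_S first_gt)).
Qed.

Section Sparse.
Hypothesis U_sparse : edges_in e U <= #|U|.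

Lemma sparse_degrees :
  [/\ forall s, s \in S -> deg_in e U s = 3,
      forall t, t \in T -> deg_in e U t + (t \in pendant) = 2
    & #|S| <= #|pendant|].
Proof.
have deg_S s : s \in S -> 3 <= deg_in e U s by move=> sS; rewrite deg_in_U_S.
have deg_T t : t \in T -> 2 <= deg_in e U t + (t \in pendant).
  move=> tT; have [tp | tNp] := boolP (t \in pendant); last first.
    by move: tNp; rewrite inE tT /= -ltnNge addn0.
  have [s sS est] := T_nbr tT; rewrite addn1 ltnS card_gt0.
  by apply/set0Pn; exists s; rewrite inE e_sym est andbT inE sS.
have sum_S : #|S| * 3 <= \sum_(s in S) deg_in e U s.
  by rewrite -sum_nat_const; apply: leq_sum.
have sum_T : #|T| * 2 <= \sum_(t in T) (deg_in e U t + (t \in pendant)).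
  by rewrite -sum_nat_const; apply: leq_sum.
have card_pendant : \sum_(t in T) (t \in pendant : nat) = #|pendant|.
  rewrite -sum1_card [RHS](eq_bigl (fun t => (t \in T) && (t \in pendant))).
    by rewrite big_mkcondr; apply: eq_bigr => t _; case: (t \in pendant).
  by move=> t; rewrite andb_idl //; apply: pendant_T.
rewrite big_split /= card_pendant in sum_T.
have := sum_deg_in_le_edges e_irr U; rewrite sum_U.
have := U_sparse; rewrite card_U; have := card_pendant_le.
split; first (apply: sum_lbound_eq => //; lia).
- apply: sum_lbound_eq => //; rewrite big_split /= card_pendant; lia.
- lia.
Qed.

Lemma gdeg_S s : s \in S -> gdeg e s = 3.
Proof. by move=> sS; rewrite -deg_in_U_S //; case: sparse_degrees => ->. Qed.

Lemma deg_nonpendant t : t \in T -> t \notin pendant -> deg_in e U t = 2.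
Proof.
move=> tT /negbTE tNp; case: sparse_degrees => _ /(_ t tT).
by rewrite tNp addn0.
Qed.

Lemma pendant_nbr s : s \in S -> exists2 w, w \in pendant & e s w.
Proof.
move=> sS; suff : 0 < #|[set t in pendant | e s t]|.
  by case/card_gt0P => w /setIdP [wp esw]; exists w.
rewrite (sum_ubound_eq pendant_nbr_le1 _ sS) // exchange_sum_card muln1.
case: sparse_degrees => _ _ /leq_trans; apply.
rewrite -sum1_card; apply: leq_sum => t /pendant_T /T_nbr.
by case=> s' s'S es't; rewrite card_gt0; apply/set0Pn; exists s'; rewrite inE s'S.
Qed.

Lemma nonpendant_index Q c : rotation Q -> e (last x0 Q) c ->
  c \notin pendant -> (index c Q).+2 < size P.
Proof.
move=> QR elast cNp.
have [w wp ew] := pendant_nbr (last_rotation_in_S QR).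
have [clt _] := succ_nbr_last_rotation QR elast.
have wi := pendant_index QR erefl ew wp.
have : index c Q != (size P).-2.
  apply: contraNneq cNp => ci.
  rewrite -(nth_index x0 (nbr_last_rotation_mem QR elast)) ci -wi.
  by rewrite nth_index // (nbr_last_rotation_mem QR ew).
lia.
Qed.

Lemma nonpendant_nbr_in_S s s' c : s \in S -> s' \in S -> e s s' -> e s c ->
  c \notin pendant -> c \in S.
Proof.
move=> sS s'S ess' esc cNp; have [Q QR lastQ] := S_rotation s'S.
have QP := rotation_path_on QR; have elast : e (last x0 Q) s by rewrite lastQ e_sym.
have [_ gS] := succ_nbr_last_rotation QR elast.
have slt := nonpendant_index QR elast (S_notin_pendant sS).
set g := nth x0 Q (index s Q).+1 in gS.
have gs' : g != s'.
  by rewrite -lastQ -(nth_last_path_on QP); apply/eqP => /(nth_path_on_inj QP); lia.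
have esg : e s g.
  by rewrite -{1}(nth_index x0 (nbr_last_rotation_mem QR elast)) edge_path_on // ltnW.
have [w wp esw] := pendant_nbr sS; have wS := T_notin_S (pendant_T wp).
(* Otherwise w, s', g and c are four distinct neighbours of s. *)
apply: contraT => cS; suff : #|[:: w; s'; g; c]| <= gdeg e s.
  have ne (A : {set V}) x y : x \in A -> y \notin A -> x != y.
    by move=> xA; apply: contraNneq => <-.
  rewrite gdeg_S // (card_uniqP _) //= !inE !negb_or.
  rewrite [w == s']eq_sym [w == g]eq_sym [s' == g]eq_sym gs'.
  by rewrite !(ne _ _ _ wp cNp, ne _ _ _ s'S cS, ne _ _ _ gS cS,
               ne _ _ _ s'S wS, ne _ _ _ gS wS).
apply/subset_leq_card/subsetP => u; rewrite !inE.
by case/or4P => /eqP ->; rewrite ?esw ?ess' ?esg ?esc.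
Qed.

Definition linked (s : V) : bool := [exists u in S, e s u].

Lemma linked_rotation_step A B : rotation A -> rotation_step e x0 A B ->
  linked (last x0 A) = linked (last x0 B).
Proof.
move=> AR [i [ilt elast ->]]; rewrite -/(rotate_after i A) last_rotate_after //.
have AP := rotation_path_on AR; have AS := last_rotation_in_S AR.
have gS : nth x0 A i.+1 \in S.
  by rewrite -last_rotate_after //; apply/last_rotation_in_S/rotation_rotate_after.
have ilt' : i < size A by apply: ltnW (ltnW ilt).
have iltP : i.+2 < size P by rewrite -(size_path_on AP).
(* The pivot [nth x0 A i] is a non-pendant common neighbour of both endpoints. *)
have cNp : nth x0 A i \notin pendant.
  apply/negP => /(pendant_index AR erefl elast).
  by rewrite index_uniq ?(uniq_path_on AP) //; lia.
have ecg : e (nth x0 A i) (nth x0 A i.+1) by exact/edge_path_on/ltnW.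
apply/exists_inP/exists_inP => -[u uS eu]; exists (nth x0 A i) => //.
- by apply: (nonpendant_nbr_in_S AS uS).
- by rewrite e_sym.
- by apply: (nonpendant_nbr_in_S gS uS); rewrite // e_sym.
Qed.

Lemma linked_rotation Q : rotation Q -> linked (last x0 Q) = linked (last x0 P).
Proof.
elim/clos_refl_trans_ind_left => // A B AR <-.
by move/(linked_rotation_step AR).
Qed.

Lemma last_P_unlinked : ~~ linked (last x0 P).
Proof.
have [Q QR lastQ] := S_rotation nth_first_S; have QP := rotation_path_on QR.
have m_pos := first_S_pos; have m_lt := first_S_lt_pred.
set m := first_S in m_pos m_lt lastQ QR *.
have prev_lt : m.-1 < m by rewrite ltn_predL.
have prevQ : nth x0 Q m.-1 = nth x0 P m.-1.
  by rewrite -(nth_take x0 prev_lt) take_first_S_rotation // nth_take.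
have prevNS := before_first_S prev_lt.
have e_prev : e (nth x0 P m) (nth x0 P m.-1).
  rewrite e_sym -{2}(prednK m_pos); apply: (edge_path_on path_on_P).
  by rewrite prednK // first_S_lt.
have prevNp : nth x0 P m.-1 \notin pendant.
  apply/negP => /(pendant_index QR lastQ e_prev).
  rewrite -prevQ index_uniq ?(uniq_path_on QP) ?(size_path_on QP); lia.
rewrite -(linked_rotation QR) lastQ; apply: contra prevNS => /exists_inP [u uS eu].
exact: (nonpendant_nbr_in_S nth_first_S uS).
Qed.

Lemma no_edge_in_S s u : s \in S -> u \in S -> ~~ e s u.
Proof.
move=> /S_rotation [Q QR <-] uS; have := last_P_unlinked.
by rewrite -(linked_rotation QR); apply: contra => esu; apply/exists_inP; exists u.
Qed.

Lemma card_S_le_nonpendant : #|S| <= #|T :\: pendant|.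
Proof.
have nbr_S s : s \in S -> 2 <= #|[set t in T :\: pendant | e s t]|.
  move=> sS; have nbr_sub : [set u | e s u] \subset
      [set t in pendant | e s t] :|: [set t in T :\: pendant | e s t].
    apply/subsetP => u; rewrite inE => esu.
    have uS : u \notin S by apply: contraTN esu; apply: no_edge_in_S.
    have := nbr_S_in_U sS esu; rewrite in_setU (negbTE uS) /= => uT.
    apply/setUP; have [up | uNp] := boolP (u \in pendant); [left | right].
      by apply/setIdP.
    by apply/setIdP; split=> //; apply/setDP.
  have := subset_leq_card nbr_sub.
  have := (leq_card_setU [set t in pendant | e s t]
                         [set t in T :\: pendant | e s t]).1.
  by have := pendant_nbr_le1 sS; have := gdeg_S sS; rewrite /gdeg; lia.
have nbr_T t : t \in T :\: pendant -> #|[set s in S | e s t]| <= 2.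
  case/setDP => tT tNp; rewrite -(deg_nonpendant tT tNp).
  apply/subset_leq_card/subsetP => u /setIdP [uS eut].
  by rewrite inE e_sym eut andbT in_setU uS.
have := exchange_sum_card S (T :\: pendant) e.
have : #|S| * 2 <= \sum_(s in S) #|[set t in T :\: pendant | e s t]|.
  by rewrite -sum_nat_const; apply: leq_sum.
have : \sum_(t in T :\: pendant) #|[set s in S | e s t]| <= #|T :\: pendant| * 2.
  by rewrite -sum_nat_const; apply: leq_sum.
lia.
Qed.

Lemma sparse_contra : False.
Proof.
have := cardsID pendant T; rewrite (setIidPr _); last first.
  by apply/subsetP => t /pendant_T.
have := card_S_le_nonpendant; have := card_T_lt.
by case: sparse_degrees => _ _; lia.
Qed.

End Sparse.

End Posa.

Theorem lemma2p1 (V : finType) (e : rel V)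
  (e_sym : symmetric e) (e_irr : irreflexive e)
  (mindeg : forall v : V, 3 <= gdeg e v)
  (x0 : V) (P : seq V)
  (P_path : is_path_from e x0 P)
  (P_longest : forall q : seq V, is_path_from e x0 q -> size q <= size P)
  (S : {set V})
  (S_def : forall v : V, v \in S <->
       (v = last x0 P \/
        exists q : seq V, rotations e x0 P q /\ last x0 q = v /\ v <> x0)) :
  #|S :|: nbhd_out e S| < edges_in e (S :|: nbhd_out e S).
Proof.
rewrite ltnNge; apply/negP => sparse.
exact: (sparse_contra e_sym e_irr mindeg P_path P_longest S_def sparse).
Qed.
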